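(* Let $q_1=(\mathbf A_1,\mathbf b_1),q_2=(\mathbf A_2,\mathbf b_2)\in Q$ be distinct points such that the line $q_1q_2$ is horizontal. Then the projected pair of 2-gons, with vertices $A_1=[\mathbf A_1],A_2=[\mathbf A_2]$ and edges $b_1=[\mathbf b_1],b_2=[\mathbf b_2]$, is inscribed, i.e., the point $b_1\cap b_2$ lies on the line $A_1A_2$. Conversely, every inscribed pair of 2-gons (points $A_1\neq A_2$, lines $b_1\neq b_2$ with $b_1\cap b_2\in A_1A_2$) with $A_i\notin b_i$ for $i=1,2$ lifts to a unique horizontal 2-gon in $Q$, i.e., there are unique $(\mathbf A_i,\mathbf b_i)\in Q$ with $[\mathbf A_i]=A_i$, $[\mathbf b_i]=b_i$ and the line through them horizontal.
   Context: $Q:=\{(\mathbf A,\mathbf b)\in\mathbb R^3\times(\mathbb R^3)^*:\mathbf b\mathbf A=1\}$ ($\mathbf A$ column, $\mathbf b$ row). For $\mathbf A,\mathbf A'\in\mathbb R^3$, $\mathbf A\times\mathbf A':=\det(\mathbf A,\mathbf A',\cdot)\in(\mathbb R^3)^*$. The distribution $\mathscr D$ on $Q$ at $(\mathbf A,\mathbf b)$ consists of vectors $(\dot{\mathbf A},\dot{\mathbf b})$ with $\dot{\mathbf b}\mathbf A+\mathbf b\dot{\mathbf A}=0$ and $\dot{\mathbf b}=\mathbf A\times\dot{\mathbf A}$. A line is horizontal if it is an affine line contained in $Q$ and everywhere tangent to $\mathscr D$. $[\mathbf A]\in\mathbb{RP}^2$ is the point with homogeneous coordinates $\mathbf A$;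 $[\mathbf b]$ is the line $\{X:\mathbf bX=0\}$. *)

From mathcomp Require Import all_boot all_order all_algebra.
From mathcomp Require Import reals.
Set Implicit Arguments. Unset Strict Implicit. Unset Printing Implicit Defensive.
Import Order.TTheory GRing.Theory Num.Theory.
Local Open Scope ring_scope.

Section Defs.
Variable R : realType.

(* column vectors A in R^3, row vectors b in (R^3)^* *)
Definition pairing (b : 'rV[R]_3) (A : 'cV[R]_3) : R := (b *m A) ord0 ord0.

Definition det3 (u v w : 'cV[R]_3) : R :=
  \det (\matrix_(i < 3, j < 3)
          (if j == 0 :> nat then u i ord0
           else if j == 1 :> nat then v i ord0 else w i ord0)).

Definition evec (j : 'I_3) : 'cV[R]_3 := \col_(i < 3) (i == j)%:R.

Definition cross (u v : 'cV[R]_3) : 'rV[R]_3 := \row_(j < 3) det3 u v (evec j).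

Definition inQ (A : 'cV[R]_3) (b : 'rV[R]_3) : Prop := pairing b A = 1.

Definition inD (A : 'cV[R]_3) (b : 'rV[R]_3) (dA : 'cV[R]_3) (db : 'rV[R]_3) : Prop :=
  pairing db A + pairing b dA = 0 /\ db = cross A dA.

(* the affine line through (A1,b1), (A2,b2) is contained in Q and
   everywhere tangent to D (its direction vector lies in D at each point) *)
Definition horizontal_line (A1 : 'cV[R]_3) (b1 : 'rV[R]_3)
    (A2 : 'cV[R]_3) (b2 : 'rV[R]_3) : Prop :=
  forall t : R,
    inQ (A1 + t *: (A2 - A1)) (b1 + t *: (b2 - b1)) /\
    inD (A1 + t *: (A2 - A1)) (b1 + t *: (b2 - b1)) (A2 - A1) (b2 - b1).

(* projective equality [u] = [v] of nonzero (co)vectors *)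
Definition proj_eq (m n : nat) (u v : 'M[R]_(m, n)) : Prop :=
  exists c : R, c != 0 /\ u = c *: v.

Definition on_line (b : 'rV[R]_3) (X : 'cV[R]_3) : Prop := pairing b X = 0.

Definition on_join (a1 a2 X : 'cV[R]_3) : Prop := det3 a1 a2 X = 0.

Definition inscribed (a1 a2 : 'cV[R]_3) (b1 b2 : 'rV[R]_3) : Prop :=
  ~ proj_eq a1 a2 /\ ~ proj_eq b1 b2 /\
  forall X : 'cV[R]_3, X != 0 -> on_line b1 X -> on_line b2 X -> on_join a1 a2 X.

End Defs.

From mathcomp Require Import all_boot all_order all_algebra.
From mathcomp Require Import reals ring lra polyrcf.
Set Implicit Arguments. Unset Strict Implicit. Unset Printing Implicit Defensive.
Import GRing.Theory Num.Theory.
Local Open Scope ring_scope.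

(* Along a horizontal line the covector moves by the cross product: the line
   through (A1, b1) and (A2, b2) in Q is horizontal iff b2 = b1 + A1 × A2.
   Hence b2 X - b1 X = det(A1, A2, X), so b1 and b2 meet on the line A1A2.
   Conversely, inscribedness says that A1 × A2 vanishes at b1 /\ b2, i.e.
   A1 × A2 = x b1 + y b2.  For a lift A_i = s_i a_i, b_i = t_i be_i,
   horizontality forces t1 = - s1 s2 x and t2 = s1 s2 y, and the equations
   b_i A_i = 1 become s1^2 s2 p = 1 = s1 s2^2 q.  Their product reads
   (s1 s2)^3 p q = 1, so s1 s2 is the real cube root of (p q)^-1, which in
   turn determines s1 and s2. *)

Section HorizontalTwoGons.
Variable R : realType.
Implicit Types (u v w A : 'cV[R]_3) (b : 'rV[R]_3).

Local Notation i0 := (@Ordinal 3 0 isT).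
Local Notation i1 := (@Ordinal 3 1 isT).
Local Notation i2 := (@Ordinal 3 2 isT).

Lemma ord3P (P : 'I_3 -> Prop) : P i0 -> P i1 -> P i2 -> forall j, P j.
Proof.
by move=> P0 P1 P2 [[|[|[|//]]] lt_j3]; [move: P0 | move: P1 | move: P2];
  congr P; apply: val_inj.
Qed.

Lemma cV3P u v :
  u i0 ord0 = v i0 ord0 -> u i1 ord0 = v i1 ord0 -> u i2 ord0 = v i2 ord0 -> u = v.
Proof. by move=> *; apply/matrixP => i j; rewrite (ord1 j); elim/ord3P: i. Qed.

Lemma rV3P b b' :
  b ord0 i0 = b' ord0 i0 -> b ord0 i1 = b' ord0 i1 -> b ord0 i2 = b' ord0 i2 -> b = b'.
Proof. by move=> *; apply/matrixP => i j; rewrite (ord1 i); elim/ord3P: j. Qed.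

Lemma det_mx33 (M : 'M[R]_3) : \det M =
    M i0 i0 * (M i1 i1 * M i2 i2 - M i1 i2 * M i2 i1)
  - M i0 i1 * (M i1 i0 * M i2 i2 - M i1 i2 * M i2 i0)
  + M i0 i2 * (M i1 i0 * M i2 i1 - M i1 i1 * M i2 i0).
Proof.
(* Indexing through [inord] makes the ordinals produced by the Laplace
   expansion reduce to the same numerals as i0, i1, i2. *)
pose f k l := M (inord k) (inord l).
have -> : M = \matrix_(i, j) f i j by apply/matrixP => i j; rewrite mxE /f !inord_val.
rewrite (expand_det_row _ ord0) !big_ord_recr big_ord0 /cofactor /=.
rewrite !(expand_det_row _ ord0) !big_ord_recr !big_ord0 /cofactor /= !det_mx11 !mxE /=.
rewrite /bump /=; ring.
Qed.

Lemma pairingE b A :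
  pairing b A = b ord0 i0 * A i0 ord0 + b ord0 i1 * A i1 ord0 + b ord0 i2 * A i2 ord0.
Proof.
rewrite /pairing mxE !big_ord_recr big_ord0 /= add0r.
by congr (_ * _ + _ * _ + _ * _); congr (_ _ _); apply: val_inj.
Qed.

Lemma det3E u v w : det3 u v w =
    u i0 ord0 * (v i1 ord0 * w i2 ord0 - w i1 ord0 * v i2 ord0)
  - v i0 ord0 * (u i1 ord0 * w i2 ord0 - w i1 ord0 * u i2 ord0)
  + w i0 ord0 * (u i1 ord0 * v i2 ord0 - v i1 ord0 * u i2 ord0).
Proof. by rewrite /det3 det_mx33 !mxE /=; ring. Qed.

Ltac coords := rewrite /cross /evec ?pairingE ?det3E; repeat rewrite ?det3E !mxE /=.

Lemma pairingDl b b' A : pairing (b + b') A = pairing b A + pairing b' A.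
Proof. by rewrite /pairing mulmxDl [LHS]mxE. Qed.

Lemma pairingZl k b A : pairing (k *: b) A = k * pairing b A.
Proof. by rewrite /pairing -scalemxAl [LHS]mxE. Qed.

Lemma pairingZr k b A : pairing b (k *: A) = k * pairing b A.
Proof. by rewrite /pairing -scalemxAr [LHS]mxE. Qed.

Lemma pairing_trC b A : pairing b A = pairing A^T b^T.
Proof. by rewrite /pairing -trmx_mul [RHS]mxE. Qed.

Lemma pairing_cross u v w : pairing (cross u v) w = det3 u v w.
Proof. coords; ring. Qed.

Lemma det3_uvu u v : det3 u v u = 0.
Proof. by rewrite det3E; ring. Qed.

Lemma det3_uvv u v : det3 u v v = 0.
Proof. by rewrite det3E; ring. Qed.

Lemma crossZl k u v : cross (k *: u) v = k *: cross u v.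
Proof. by apply: rV3P; coords; ring. Qed.

Lemma crossZr k u v : cross u (k *: v) = k *: cross u v.
Proof. by apply: rV3P; coords; ring. Qed.

Lemma crossBr u v w : cross u (v - w) = cross u v - cross u w.
Proof. by apply: rV3P; coords; ring. Qed.

Lemma crossvv u : cross u u = 0.
Proof. by apply: rV3P; coords; ring. Qed.

Lemma crossv0 u : cross u 0 = 0.
Proof. by rewrite -(scale0r u) crossZr scale0r. Qed.

Definition dot u v := pairing u^T v.

Lemma dot_self_eq0 u : dot u u = 0 -> u = 0.
Proof.
rewrite /dot; coords => uu0.
by apply: cV3P; rewrite mxE; nra.
Qed.

Lemma cross_cross u v w : cross u (cross v w)^T = (dot u w *: v - dot u v *: w)^T.
Proof. by apply: rV3P; rewrite /dot; coords; ring. Qed.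

(* The expansion of n × (w × n) = |n|² w - (n·w) n for n = u × v. *)
Lemma gram_identity u v w :
  dot (cross u v)^T (cross u v)^T *: w = det3 u v w *: (cross u v)^T
    + ((dot w u * dot v v - dot w v * dot u v) *: u
       + (dot w v * dot u u - dot w u * dot u v) *: v).
Proof. by apply: cV3P; rewrite /dot; coords; ring. Qed.

Lemma proj_eq_trmx m n (M N : 'M[R]_(m, n)) : proj_eq M^T N^T -> proj_eq M N.
Proof. by move=> [k [k0 /(congr1 trmx)]]; rewrite linearZ /= !trmxK; exists k. Qed.

Lemma free_of_not_proj_eq m n (M N : 'M[R]_(m, n)) k l :
  M != 0 -> N != 0 -> ~ proj_eq M N -> k *: M = l *: N -> k = 0 /\ l = 0.
Proof.
move=> M0 N0 MN kl.
have [k0 | k0] := eqVneq k 0.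
  by move: kl; rewrite k0 scale0r => /esym/eqP; rewrite scaler_eq0 (negbTE N0) orbF => /eqP.
exfalso; apply: MN; exists (k^-1 * l); split.
  rewrite mulf_neq0 ?invr_eq0 //; apply: contra_neq M0 => l0.
  by apply/eqP; move: kl; rewrite l0 scale0r => /eqP; rewrite scaler_eq0 (negbTE k0).
by rewrite -scalerA -kl scalerA mulVf // scale1r.
Qed.

Lemma cross_eq0_proj_eq u v : u != 0 -> v != 0 -> cross u v = 0 -> proj_eq u v.
Proof.
move=> u0 v0 uv0.
have vv0 : dot v v != 0 by apply: contra_neq v0 => /dot_self_eq0.
have : dot v v *: u = dot v u *: v.
  by apply/trmx_inj/eqP; rewrite -subr_eq0 -linearB /= -cross_cross uv0 trmx0 crossv0.
move=> /(congr1 ( *:%R (dot v v)^-1)); rewrite !scalerA mulVf // scale1r => hu.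
exists ((dot v v)^-1 * dot v u); split => //.
by apply: contra_neq u0 => c0; rewrite hu c0 scale0r.
Qed.

Lemma det3_eq0_span u v w :
  cross u v != 0 -> det3 u v w = 0 -> exists x y, w = x *: u + y *: v.
Proof.
move=> uv0 uvw0; set n := (cross u v)^T.
have nn0 : dot n n != 0.
  by apply: contra_neq uv0 => /dot_self_eq0 /(congr1 trmx); rewrite trmxK trmx0.
have := gram_identity u v w; rewrite uvw0 scale0r add0r -/n.
move=> /(congr1 ( *:%R (dot n n)^-1)); rewrite scalerA mulVf // scale1r scalerDr !scalerA => ->.
by do 2 eexists.
Qed.

Lemma inQ_neq0 A b : inQ A b -> A != 0.
Proof.
by move=> Q; apply: contra_eq_neq Q => ->; rewrite /pairing mulmx0 mxE eq_sym oner_neq0.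
Qed.

Lemma inQ_scale_neq0 k l A b : inQ (k *: A) (l *: b) -> k != 0 /\ l != 0.
Proof.
rewrite /inQ pairingZl pairingZr => Q.
by split; apply: contra_eq_neq Q => ->; rewrite ?mul0r ?mulr0 eq_sym oner_neq0.
Qed.

Lemma horizontal_lineP A1 b1 A2 b2 : inQ A1 b1 -> inQ A2 b2 ->
  horizontal_line A1 b1 A2 b2 <-> b2 = b1 + cross A1 A2.
Proof.
move=> Q1 Q2; split.
  move=> /(_ 0) [_ [_]]; rewrite scale0r addr0 crossBr crossvv subr0 => <-.
  by rewrite addrC subrK.
move=> b2E; rewrite b2E in Q2 * => t.
have -> : b1 + cross A1 A2 - b1 = cross A1 A2 by rewrite addrC addKr.
rewrite /inQ /inD; split; last split.
- have -> : pairing (b1 + t *: cross A1 A2) (A1 + t *: (A2 - A1))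
          = (1 - t) * pairing b1 A1 + t * pairing (b1 + cross A1 A2) A2.
    by coords; ring.
  by rewrite Q1 Q2; ring.
- have -> : pairing (cross A1 A2) (A1 + t *: (A2 - A1))
              + pairing (b1 + t *: cross A1 A2) (A2 - A1)
          = pairing (b1 + cross A1 A2) A2 - pairing b1 A1.
    by coords; ring.
  by rewrite Q1 Q2 subrr.
- by apply: rV3P; coords; ring.
Qed.

Lemma horizontal_inscribed A1 b1 A2 b2 :
  inQ A1 b1 -> inQ A2 b2 -> (A1, b1) <> (A2, b2) ->
  horizontal_line A1 b1 A2 b2 -> inscribed A1 A2 b1 b2.
Proof.
move=> Q1 Q2 neq /(horizontal_lineP Q1 Q2) b2E.
have b1A2 : pairing b1 A2 = 1.
  by move: Q2; rewrite /inQ b2E pairingDl pairing_cross det3_uvv addr0.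
have A12 : ~ proj_eq A1 A2.
  move=> [c [_ A1E]]; move: Q1; rewrite /inQ A1E pairingZr b1A2 mulr1 => c1.
  by apply: neq; rewrite b2E A1E c1 scale1r crossvv addr0.
split=> //; split=> [[c [_ b1E]] | X _ X1 X2].
  have c1 : c = 1.
    by move: b1A2; rewrite b1E pairingZl Q2 mulr1.
  apply: A12; apply: cross_eq0_proj_eq; rewrite ?(inQ_neq0 Q1) ?(inQ_neq0 Q2) //.
  by apply: (addrI b1); rewrite addr0 -b2E b1E c1 scale1r.
by move: X2; rewrite /on_line b2E pairingDl X1 add0r pairing_cross.
Qed.

Lemma inscribed_cross_span (a1 a2 : 'cV[R]_3) (be1 be2 : 'rV[R]_3) :
  be1 != 0 -> be2 != 0 -> inscribed a1 a2 be1 be2 ->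
  exists x y, cross a1 a2 = x *: be1 + y *: be2.
Proof.
move=> be1_neq0 be2_neq0 [_ [be12 inscr]].
have X_neq0 : cross be1^T be2^T != 0.
  apply/eqP => /cross_eq0_proj_eq; rewrite !trmx_eq0 => /(_ be1_neq0 be2_neq0).
  by move/proj_eq_trmx.
(* (be1^T × be2^T)^T spans the point [be1] /\ [be2]. *)
have onX b : pairing b (cross be1^T be2^T)^T = det3 be1^T be2^T b^T.
  by rewrite pairing_trC trmxK pairing_cross.
have := inscr (cross be1^T be2^T)^T; rewrite trmx_eq0 /on_line /on_join -pairing_cross.
rewrite !onX det3_uvu det3_uvv.
move=> /(_ X_neq0 erefl erefl) /(det3_eq0_span X_neq0) [x [y xyE]].
by exists x, y; rewrite -[cross a1 a2]trmxK xyE linearD !linearZ /= !trmxK.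
Qed.

Lemma cube_root (x : R) : exists c, c ^+ 3 = x.
Proof.
have [|c] := @odd_poly_root _ ('X^3 - x%:P); first by rewrite size_XnsubC.
by rewrite /root !hornerE subr_eq0 => /eqP; exists c.
Qed.

Lemma cube_inj : injective (fun c : R => c ^+ 3).
Proof.
move=> x y /= xy3; apply/eqP; rewrite -subr_eq0.
have : (x - y) * ((x - y) ^+ 2 + 3 * (x + y) ^+ 2) == 0.
  by apply/eqP; transitivity (4 * (x ^+ 3 - y ^+ 3)); [ring | rewrite xy3 subrr mulr0].
rewrite mulf_eq0 => /orP [// | /eqP s0]; rewrite -sqrf_eq0; apply/eqP.
by have := sqr_ge0 (x - y); have := sqr_ge0 (x + y); lra.
Qed.

Lemma cubic_system (p q : R) : p != 0 -> q != 0 ->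
  exists! s : R * R, s.1 ^+ 2 * s.2 * p = 1 /\ s.1 * s.2 ^+ 2 * q = 1.
Proof.
move=> p0 q0; have [c c3] := cube_root (p * q)^-1.
have cpq : c ^+ 3 * (p * q) = 1 by rewrite c3 mulVf ?mulf_neq0.
have c0 : c != 0 by apply: contra_eq_neq cpq => ->; rewrite expr0n mul0r eq_sym oner_neq0.
exists ((c * p)^-1, (c * q)^-1); split => [/= | [s1 s2] /= [e1 e2]].
  by split; rewrite -[X in _ = X]invr1 -[X in _ = X^-1]cpq; field; rewrite ?c0 ?p0 ?q0.
have s12 : s1 * s2 = c.
  apply: cube_inj => /=; rewrite c3; apply/esym/mulr1_eq.
  by transitivity ((s1 ^+ 2 * s2 * p) * (s1 * s2 ^+ 2 * q)); [ring | rewrite e1 e2 mulr1].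
by congr (_, _); apply: mulr1_eq; [rewrite -e1 | rewrite -e2]; rewrite -s12; ring.
Qed.

Section HorizontalLift.
Variables (a1 a2 : 'cV[R]_3) (be1 be2 : 'rV[R]_3).

Definition horizontal_lift (q : 'cV[R]_3 * 'rV[R]_3 * 'cV[R]_3 * 'rV[R]_3) : Prop :=
  let: (A1, b1, A2, b2) := q in
  [/\ inQ A1 b1, inQ A2 b2, proj_eq A1 a1 /\ proj_eq A2 a2,
      proj_eq b1 be1 /\ proj_eq b2 be2
    & (A1, b1) <> (A2, b2) /\ horizontal_line A1 b1 A2 b2].

Variables (x y : R).
Hypotheses (a12 : ~ proj_eq a1 a2) (be12 : ~ proj_eq be1 be2).
Hypotheses (be1_neq0 : be1 != 0) (be2_neq0 : be2 != 0).
Hypothesis cross_a12 : cross a1 a2 = x *: be1 + y *: be2.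

Definition lift_of (s : R * R) : 'cV[R]_3 * 'rV[R]_3 * 'cV[R]_3 * 'rV[R]_3 :=
  (s.1 *: a1, - (s.1 * s.2 * x) *: be1, s.2 *: a2, (s.1 * s.2 * y) *: be2).

Lemma scaled_horizontalP s1 s2 t1 t2 :
  inQ (s1 *: a1) (t1 *: be1) -> inQ (s2 *: a2) (t2 *: be2) ->
  horizontal_line (s1 *: a1) (t1 *: be1) (s2 *: a2) (t2 *: be2) <->
  t1 = - (s1 * s2 * x) /\ t2 = s1 * s2 * y.
Proof.
move=> Q1 Q2; rewrite (horizontal_lineP Q1 Q2) crossZl crossZr cross_a12 scalerA.
split=> [b2E | [-> ->]]; last by apply: rV3P; rewrite !mxE; ring.
have [] := free_of_not_proj_eq be1_neq0 be2_neq0 be12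
  (k := t1 + s1 * s2 * x) (l := t2 - s1 * s2 * y).
  by rewrite scalerBl b2E; apply: rV3P; rewrite !mxE; ring.
by move=> /eqP; rewrite addr_eq0 => /eqP -> /subr0_eq ->.
Qed.

Lemma horizontal_liftP q : horizontal_lift q <->
  exists2 s : R * R,
      s.1 ^+ 2 * s.2 * - (x * pairing be1 a1) = 1 /\
      s.1 * s.2 ^+ 2 * (y * pairing be2 a2) = 1
    & q = lift_of s.
Proof.
split.
  case: q => [[[A1 b1] A2] b2] [Q1 Q2 [[s1 [_ A1E]] [s2 [_ A2E]]]].
  move=> [[t1 [_ b1E]] [t2 [_ b2E]]] [_]; subst A1 A2 b1 b2.
  move=> /(scaled_horizontalP Q1 Q2) [t1E t2E]; exists (s1, s2); last by rewrite t1E t2E.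
  move: Q1 Q2; rewrite /inQ !pairingZl !pairingZr t1E t2E /= => Q1 Q2.
  by split; [rewrite -Q1 | rewrite -Q2]; ring.
move=> [[s1 s2] /= [e1 e2] ->].
have Q1 : inQ (s1 *: a1) (- (s1 * s2 * x) *: be1).
  by rewrite /inQ pairingZl pairingZr -e1; ring.
have Q2 : inQ (s2 *: a2) ((s1 * s2 * y) *: be2).
  by rewrite /inQ pairingZl pairingZr -e2; ring.
have [[s1_neq0 t1_neq0] [s2_neq0 t2_neq0]] := (inQ_scale_neq0 Q1, inQ_scale_neq0 Q2).
split=> //.
- by split; [exists s1 | exists s2].
- by split; [exists (- (s1 * s2 * x)) | exists (s1 * s2 * y)].
split; last exact/(scaled_horizontalP Q1 Q2).
move=> [a12E _]; apply: a12; exists (s1^-1 * s2); split; first by rewrite mulf_neq0 ?invr_eq0.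
by rewrite -scalerA -a12E scalerA mulVf // scale1r.
Qed.

Lemma horizontal_lift_unique : x != 0 -> y != 0 ->
  pairing be1 a1 != 0 -> pairing be2 a2 != 0 -> exists! q, horizontal_lift q.
Proof.
move=> x_neq0 y_neq0 k1_neq0 k2_neq0.
have p_neq0 : - (x * pairing be1 a1) != 0 by rewrite oppr_eq0 mulf_neq0.
have q_neq0 : y * pairing be2 a2 != 0 by rewrite mulf_neq0.
have [s [eqs_s s_uniq]] := cubic_system p_neq0 q_neq0.
exists (lift_of s); split; first by apply/horizontal_liftP; exists s.
by move=> q /horizontal_liftP [s' eqs_s' ->]; rewrite (s_uniq s' eqs_s').
Qed.

Lemma cross_coef_neq0 : a1 != 0 -> a2 != 0 ->
  pairing be1 a1 != 0 -> pairing be2 a2 != 0 -> x != 0 /\ y != 0.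
Proof.
move=> a1_neq0 a2_neq0 k1_neq0 k2_neq0.
have not_xy0 : x = 0 -> y = 0 -> False.
  move=> x0 y0; apply/a12/cross_eq0_proj_eq => //.
  by rewrite cross_a12 x0 y0 !scale0r addr0.
have := det3_uvu a1 a2; have := det3_uvv a1 a2.
rewrite -!pairing_cross cross_a12 !pairingDl !pairingZl => e2 e1.
split; apply/eqP; [move=> x0 | move=> y0]; apply: not_xy0 => //.
  by move: e2; rewrite x0 mul0r add0r => /eqP; rewrite mulf_eq0 (negbTE k2_neq0) orbF => /eqP.
by move: e1; rewrite y0 mul0r addr0 => /eqP; rewrite mulf_eq0 (negbTE k1_neq0) orbF => /eqP.
Qed.

End HorizontalLift.
End HorizontalTwoGons.

Theorem lemma1 (R : realType) :
  (forall (A1 A2 : 'cV[R]_3) (b1 b2 : 'rV[R]_3),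
      inQ A1 b1 -> inQ A2 b2 -> (A1, b1) <> (A2, b2) ->
      horizontal_line A1 b1 A2 b2 ->
      inscribed A1 A2 b1 b2) /\
  (forall (a1 a2 : 'cV[R]_3) (be1 be2 : 'rV[R]_3),
      a1 != 0 -> a2 != 0 -> be1 != 0 -> be2 != 0 ->
      inscribed a1 a2 be1 be2 ->
      ~ on_line be1 a1 -> ~ on_line be2 a2 ->
      exists! q : 'cV[R]_3 * 'rV[R]_3 * 'cV[R]_3 * 'rV[R]_3,
        let: (A1, b1, A2, b2) := q in
        [/\ inQ A1 b1, inQ A2 b2,
            proj_eq A1 a1 /\ proj_eq A2 a2,
            proj_eq b1 be1 /\ proj_eq b2 be2
          & (A1, b1) <> (A2, b2) /\ horizontal_line A1 b1 A2 b2]).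
Proof.
split; first by move=> A1 A2 b1 b2; apply: horizontal_inscribed.
move=> a1 a2 be1 be2 a1_neq0 a2_neq0 be1_neq0 be2_neq0 inscr a1be1 a2be2.
have [x [y cross_a12]] := inscribed_cross_span be1_neq0 be2_neq0 inscr.
have [a12 [be12 _]] := inscr.
have k1_neq0 : pairing be1 a1 != 0 by apply/eqP.
have k2_neq0 : pairing be2 a2 != 0 by apply/eqP.
have [x_neq0 y_neq0] := cross_coef_neq0 a12 cross_a12 a1_neq0 a2_neq0 k1_neq0 k2_neq0.
exact: horizontal_lift_unique a12 be12 be1_neq0 be2_neq0 cross_a12 x_neq0 y_neq0 k1_neq0 k2_neq0.
Qed.
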